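(* Let $A\in(0,1)$, $M<0$, $Q>0$, $S>0$ and consider the planar system $$\frac{du}{d\tau}=u^2\big((u+A)(1-u)(u-M)-Qv\big),\qquad \frac{dv}{d\tau}=S(u+A)(u-v)v$$ on $\{u\ge0,\ v\ge0\}$. Put $T=1-A+M$, $L=A(M+1)-Q-M$ and $g(u)=u^3-Tu^2-Lu+AM$. Let $u^*\in(0,1)$ be a root of $g$, $\Delta=(u^*-T)^2-4\big(u^*(u^*-T)-L\big)$, and suppose $T>0$, $L<0$ and $\Delta\ge0$. Let $u^*_\pm=\tfrac12\big(T-u^*\pm\sqrt{\Delta}\big)$, with the root $u^*$ chosen so that $u^*\le u^*_-\le u^*_+$. Set $P_1=(u^*,u^* )$, $P_2=(u^*_-,u^*_-)$ and $P_3=(u^*_+,u^*_+)$. (I) If $P_1=P_2$, then this equilibrium of multiplicity two is an unstable saddle-node if $S<\dfrac{Qu^*}{A+u^*}$, and a stable saddle-node if $S>\dfrac{Qu^*}{A+u^*}$. (II) If $P_2=P_3$, then this equilibrium of multiplicity two is an unstable saddle-node if $S<\dfrac{Q(T-u^* )}{1+A+M-u^*}$, and a stable saddle-node if $S>\dfrac{Q(T-u^* )}{1+A+M-u^*}$.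
   Context: The positive equilibria of the system are the points $(u,u)$ with $u>0$ a root of $g$. A root $u^*\in(0,1)$ of $g$ exists since $g(0)=AM<0<Q=g(1)$. $\Delta$ is the discriminant and $u^*_\pm$ are the roots of the quadratic $g(u)/(u-u^* )=u^2+(u^*-T)u+u^*(u^*-T)-L$. Under these hypotheses $g$ has three roots in $(0,1)$ counting multiplicity. The paper fixes, as a standing convention, the choice of $u^*$ to be the smallest of them. *)

From Stdlib Require Import Reals Lra.
From Coquelicot Require Import Coquelicot.
Open Scope R_scope.

Definition pdx (F : R -> R -> R) (x y : R) : R := Derive (fun t => F t y) x.
Definition pdy (F : R -> R -> R) (x y : R) : R := Derive (fun t => F x t) y.

Definition jac_tr (F G : R -> R -> R) (x y : R) : R := pdx F x y + pdy G x y.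
Definition jac_det (F G : R -> R -> R) (x y : R) : R :=
  pdx F x y * pdy G x y - pdy F x y * pdx G x y.

Definition d2 (H : R -> R -> R) (x y r1 r2 : R) : R :=
  pdx (pdx H) x y * r1 ^ 2 + 2 * pdy (pdx H) x y * r1 * r2
  + pdy (pdy H) x y * r2 ^ 2.

(* A (codimension-one, multiplicity-two) saddle-node equilibrium:
   an equilibrium whose Jacobian has a simple zero eigenvalue
   (det = 0, trace <> 0), and such that the quadratic coefficient of the
   flow reduced to the center manifold is non-zero, i.e.
   l . D^2(F,G)(p)[r,r] <> 0 for non-zero left/right null vectors l, r. *)
Definition saddle_node (F G : R -> R -> R) (x y : R) : Prop :=
  F x y = 0 /\ G x y = 0 /\
  jac_det F G x y = 0 /\ jac_tr F G x y <> 0 /\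
  exists r1 r2 l1 l2 : R,
    (r1 <> 0 \/ r2 <> 0) /\ (l1 <> 0 \/ l2 <> 0) /\
    pdx F x y * r1 + pdy F x y * r2 = 0 /\
    pdx G x y * r1 + pdy G x y * r2 = 0 /\
    l1 * pdx F x y + l2 * pdx G x y = 0 /\
    l1 * pdy F x y + l2 * pdy G x y = 0 /\
    l1 * d2 F x y r1 r2 + l2 * d2 G x y r1 r2 <> 0.

(* stability is that of the non-zero eigenvalue, which equals the trace *)
Definition stable_saddle_node (F G : R -> R -> R) (x y : R) : Prop :=
  saddle_node F G x y /\ jac_tr F G x y < 0.
Definition unstable_saddle_node (F G : R -> R -> R) (x y : R) : Prop :=
  saddle_node F G x y /\ jac_tr F G x y > 0.

Definition fu (A M Q : R) (u v : R) : R :=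
  u ^ 2 * ((u + A) * (1 - u) * (u - M) - Q * v).
Definition fv (A S : R) (u v : R) : R := S * (u + A) * (u - v) * v.

Definition T_ (A M : R) : R := 1 - A + M.
Definition L_ (A M Q : R) : R := A * (M + 1) - Q - M.
Definition g_ (A M Q : R) (u : R) : R :=
  u ^ 3 - T_ A M * u ^ 2 - L_ A M Q * u + A * M.
Definition Delta_ (A M Q ustar : R) : R :=
  (ustar - T_ A M) ^ 2 - 4 * (ustar * (ustar - T_ A M) - L_ A M Q).
Definition uminus (A M Q ustar : R) : R :=
  (T_ A M - ustar - sqrt (Delta_ A M Q ustar)) / 2.
Definition uplus (A M Q ustar : R) : R :=
  (T_ A M - ustar + sqrt (Delta_ A M Q ustar)) / 2.

(** The first factor of [du/dtau] equals [Q (u - v) - g u], so the diagonal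
    equilibria are the [(p, p)] with [g p = 0].  When [p] is a double root of
    [g], the Jacobian at [(p, p)] has the rows [Q p^2, -Q p^2] and
    [S (p + A) p, -S (p + A) p]: its determinant vanishes, its right kernel is
    spanned by the diagonal direction [(1, 1)], and its trace is
    [p (Q p - S (p + A))], whose sign is read off the threshold on [S].  Along
    the diagonal the vector field is [(-t^2 g t, 0)], so the quadratic
    center-manifold coefficient is a nonzero multiple of [g'' p], which is
    nonzero because the third root of [g] is distinct from [p].  In both cases
    of the theorem the factorisation [g u = (u - ustar) (u - uminus) (u - uplus)]
    exhibits the double root. *)

From Pilot Require Import Defs.
From Stdlib Require Import Reals Lra.
From Coquelicot Require Import Coquelicot.
Open Scope R_scope.

Lemma pdx_ext (H K : R -> R -> R) (x y : R) :
  (forall a b, H a b = K a b) -> pdx H x y = pdx K x y.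
Proof. intros E; unfold pdx; apply Derive_ext; intros; apply E. Qed.

Lemma pdy_ext (H K : R -> R -> R) (x y : R) :
  (forall a b, H a b = K a b) -> pdy H x y = pdy K x y.
Proof. intros E; unfold pdy; apply Derive_ext; intros; apply E. Qed.

Definition dg_ (A M Q u : R) : R := 3 * u ^ 2 - 2 * T_ A M * u - L_ A M Q.
Definition d2g_ (A M u : R) : R := 6 * u - 2 * T_ A M.

Section Model.

Variables A M Q S : R.

Lemma fu_g (u v : R) : fu A M Q u v = u ^ 2 * (Q * (u - v) - g_ A M Q u).
Proof. unfold fu, g_, T_, L_; ring. Qed.

Lemma is_derive_g (u : R) : is_derive (g_ A M Q) u (dg_ A M Q u).
Proof. unfold g_, dg_; auto_derive; [easy | ring]. Qed.

Lemma is_derive_dg (u : R) : is_derive (dg_ A M Q) u (d2g_ A M u).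
Proof. unfold dg_, d2g_; auto_derive; [easy | ring]. Qed.

Lemma pdx_fu (x y : R) :
  pdx (fu A M Q) x y =
  2 * x * (Q * (x - y) - g_ A M Q x) + x ^ 2 * (Q - dg_ A M Q x).
Proof.
  unfold pdx, fu, g_, dg_, T_, L_; apply is_derive_unique; auto_derive;
  [easy | ring].
Qed.

Lemma pdy_fu (x y : R) : pdy (fu A M Q) x y = - Q * x ^ 2.
Proof. unfold pdy, fu; apply is_derive_unique; auto_derive; [easy | ring]. Qed.

Lemma pdxx_fu (x y : R) :
  pdx (pdx (fu A M Q)) x y =
  2 * (Q * (x - y) - g_ A M Q x) + 4 * x * (Q - dg_ A M Q x)
  - x ^ 2 * d2g_ A M x.
Proof.
  rewrite (pdx_ext _ _ _ _ pdx_fu).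
  unfold pdx, g_, dg_, d2g_; apply is_derive_unique; auto_derive; [easy | ring].
Qed.

Lemma pdyx_fu (x y : R) : pdy (pdx (fu A M Q)) x y = - 2 * Q * x.
Proof.
  rewrite (pdy_ext _ _ _ _ pdx_fu).
  unfold pdy; apply is_derive_unique; auto_derive; [easy | ring].
Qed.

Lemma pdyy_fu (x y : R) : pdy (pdy (fu A M Q)) x y = 0.
Proof.
  rewrite (pdy_ext _ _ _ _ pdy_fu).
  unfold pdy; apply is_derive_unique; auto_derive; [easy | ring].
Qed.

Lemma pdx_fv (x y : R) : pdx (fv A S) x y = S * (2 * x - y + A) * y.
Proof. unfold pdx, fv; apply is_derive_unique; auto_derive; [easy | ring]. Qed.

Lemma pdy_fv (x y : R) : pdy (fv A S) x y = S * (x + A) * (x - 2 * y).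
Proof. unfold pdy, fv; apply is_derive_unique; auto_derive; [easy | ring]. Qed.

Lemma pdxx_fv (x y : R) : pdx (pdx (fv A S)) x y = 2 * S * y.
Proof.
  rewrite (pdx_ext _ _ _ _ pdx_fv).
  unfold pdx; apply is_derive_unique; auto_derive; [easy | ring].
Qed.

Lemma pdyx_fv (x y : R) : pdy (pdx (fv A S)) x y = S * (2 * x - 2 * y + A).
Proof.
  rewrite (pdy_ext _ _ _ _ pdx_fv).
  unfold pdy; apply is_derive_unique; auto_derive; [easy | ring].
Qed.

Lemma pdyy_fv (x y : R) : pdy (pdy (fv A S)) x y = - 2 * S * (x + A).
Proof.
  rewrite (pdy_ext _ _ _ _ pdy_fv).
  unfold pdy; apply is_derive_unique; auto_derive; [easy | ring].
Qed.

Section DoubleRoot.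

Variable p : R.
Hypothesis g_p : g_ A M Q p = 0.
Hypothesis dg_p : dg_ A M Q p = 0.

Lemma pdx_fu_double_root : pdx (fu A M Q) p p = Q * p ^ 2.
Proof. rewrite pdx_fu, g_p, dg_p; ring. Qed.

Lemma jac_det_double_root : jac_det (fu A M Q) (fv A S) p p = 0.
Proof.
  unfold jac_det; rewrite pdx_fu_double_root, pdy_fu, pdx_fv, pdy_fv; ring.
Qed.

Lemma jac_tr_double_root :
  jac_tr (fu A M Q) (fv A S) p p = p * (Q * p - S * (p + A)).
Proof. unfold jac_tr; rewrite pdx_fu_double_root, pdy_fv; ring. Qed.

Lemma d2_fu_diagonal : Defs.d2 (fu A M Q) p p 1 1 = - p ^ 2 * d2g_ A M p.
Proof. unfold Defs.d2; rewrite pdxx_fu, pdyx_fu, pdyy_fu, g_p, dg_p; ring. Qed.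

Lemma d2_fv_diagonal : Defs.d2 (fv A S) p p 1 1 = 0.
Proof. unfold Defs.d2; rewrite pdxx_fv, pdyx_fv, pdyy_fv; ring. Qed.

Lemma saddle_node_double_root :
  p <> 0 -> p + A <> 0 -> S <> 0 -> d2g_ A M p <> 0 ->
  jac_tr (fu A M Q) (fv A S) p p <> 0 ->
  saddle_node (fu A M Q) (fv A S) p p.
Proof.
  intros p_neq0 pA_neq0 S_neq0 d2g_neq0 tr_neq0.
  assert (l1_neq0 : S * (p + A) <> 0)
    by now apply Rmult_integral_contrapositive_currified.
  repeat split; [rewrite fu_g, g_p; ring | unfold fv; ring
                | exact jac_det_double_root | exact tr_neq0 |].
  exists 1, 1, (S * (p + A)), (- (Q * p)).
  rewrite pdx_fu_double_root, pdy_fu, pdx_fv, pdy_fv,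
    d2_fu_diagonal, d2_fv_diagonal.
  repeat split; [left; lra | left; exact l1_neq0 | ring | ring | ring | ring |].
  replace (S * (p + A) * (- p ^ 2 * d2g_ A M p) + - (Q * p) * 0)
    with (- (S * (p + A)) * p ^ 2 * d2g_ A M p) by ring.
  repeat apply Rmult_integral_contrapositive_currified;
    auto using Ropp_neq_0_compat, pow_nonzero.
Qed.

Lemma saddle_node_double_root_stability :
  0 < p -> 0 < p + A -> 0 < S -> d2g_ A M p <> 0 ->
  (S < Q * p / (A + p) -> unstable_saddle_node (fu A M Q) (fv A S) p p) /\
  (S > Q * p / (A + p) -> stable_saddle_node (fu A M Q) (fv A S) p p).
Proof.
  intros p_gt0 pA_gt0 S_gt0 d2g_neq0.
  split; intros S_cmp.
  - apply Rlt_div_r in S_cmp; [|lra].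
    assert (tr_pos : jac_tr (fu A M Q) (fv A S) p p > 0)
      by (rewrite jac_tr_double_root; apply Rmult_lt_0_compat; lra).
    split; [apply saddle_node_double_root|]; lra.
  - apply Rlt_div_l in S_cmp; [|lra].
    assert (tr_neg : jac_tr (fu A M Q) (fv A S) p p < 0)
      by (rewrite jac_tr_double_root; nra).
    split; [apply saddle_node_double_root|]; lra.
Qed.

End DoubleRoot.

End Model.

Lemma g_factor (A M Q ustar : R) :
  g_ A M Q ustar = 0 -> Delta_ A M Q ustar >= 0 ->
  forall u, g_ A M Q u =
    (u - ustar) * (u - uminus A M Q ustar) * (u - uplus A M Q ustar).
Proof.
  intros g_ustar Delta_ge0 u.
  assert (sqrt_sq : sqrt (Delta_ A M Q ustar) ^ 2 = Delta_ A M Q ustar)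
    by (apply pow2_sqrt; lra).
  transitivity (g_ A M Q u - g_ A M Q ustar
    + (u - ustar) / 4 * (Delta_ A M Q ustar - sqrt (Delta_ A M Q ustar) ^ 2));
    [rewrite g_ustar, sqrt_sq; ring|].
  unfold uminus, uplus; set (s := sqrt (Delta_ A M Q ustar)).
  unfold g_, Delta_; field.
Qed.

Lemma uminus_add_uplus (A M Q ustar : R) :
  uminus A M Q ustar + uplus A M Q ustar = T_ A M - ustar.
Proof. unfold uminus, uplus; field. Qed.

Lemma cubic_double_root (A M Q p c : R) :
  (forall u, g_ A M Q u = (u - p) ^ 2 * (u - c)) ->
  g_ A M Q p = 0 /\ dg_ A M Q p = 0 /\ d2g_ A M p = 2 * (p - c).
Proof.
  intros factor.
  assert (dg_eq : forall u, dg_ A M Q u = 2 * (u - p) * (u - c) + (u - p) ^ 2).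
  { intros u; rewrite <- (is_derive_unique _ _ _ (is_derive_g A M Q u)).
    rewrite (Derive_ext _ _ _ factor).
    apply is_derive_unique; auto_derive; [easy | ring]. }
  split; [rewrite factor; ring|]; split; [rewrite dg_eq; ring|].
  rewrite <- (is_derive_unique _ _ _ (is_derive_dg A M Q p)).
  rewrite (Derive_ext _ _ _ dg_eq).
  apply is_derive_unique; auto_derive; [easy | ring].
Qed.

Theorem corollary4 (A M Q S ustar : R) :
  0 < A < 1 -> M < 0 -> Q > 0 -> S > 0 ->
  0 < ustar < 1 -> g_ A M Q ustar = 0 ->
  T_ A M > 0 -> L_ A M Q < 0 -> Delta_ A M Q ustar >= 0 ->
  ustar <= uminus A M Q ustar <= uplus A M Q ustar ->
  (* (I) P1 = P2 (and P3 distinct, so that this equilibrium has multiplicity two) *)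
  (ustar = uminus A M Q ustar -> uminus A M Q ustar < uplus A M Q ustar ->
     (S < Q * ustar / (A + ustar) ->
        unstable_saddle_node (fu A M Q) (fv A S) ustar ustar) /\
     (S > Q * ustar / (A + ustar) ->
        stable_saddle_node (fu A M Q) (fv A S) ustar ustar)) /\
  (* (II) P2 = P3 (and P1 distinct) *)
  (uminus A M Q ustar = uplus A M Q ustar -> ustar < uminus A M Q ustar ->
     (S < Q * (T_ A M - ustar) / (1 + A + M - ustar) ->
        unstable_saddle_node (fu A M Q) (fv A S)
          (uminus A M Q ustar) (uminus A M Q ustar)) /\
     (S > Q * (T_ A M - ustar) / (1 + A + M - ustar) ->
        stable_saddle_node (fu A M Q) (fv A S)
          (uminus A M Q ustar) (uminus A M Q ustar))).
Proof.
  intros A_bds _ _ S_gt0 ustar_bds g_ustar _ _ Delta_ge0 _.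
  pose proof (g_factor A M Q ustar g_ustar Delta_ge0) as factor.
  set (um := uminus A M Q ustar) in *; set (up := uplus A M Q ustar) in *.
  split; intros roots_eq roots_lt.
  - destruct (cubic_double_root A M Q ustar up) as (g0 & dg0 & d2g_eq).
    { intros u; rewrite factor, <- roots_eq; ring. }
    apply saddle_node_double_root_stability; try lra.
  - destruct (cubic_double_root A M Q um ustar) as (g0 & dg0 & d2g_eq).
    { intros u; rewrite factor, <- roots_eq; ring. }
    assert (roots_sum := uminus_add_uplus A M Q ustar); fold um up in roots_sum.
    assert (num : T_ A M - ustar = 2 * um) by lra.
    assert (den : 1 + A + M - ustar = 2 * (A + um)) by (unfold T_ in num; lra).
    rewrite num, den.
    replace (Q * (2 * um) / (2 * (A + um))) with (Q * um / (A + um))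
      by (field; lra).
    apply saddle_node_double_root_stability; try lra.
Qed.
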